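(* For the iterates of the ROSS algorithm described in the context, with momentum coefficient $\alpha\in[0,1)$, define $\bar S^{[0]}=\bar x^{[0]}$ and $\bar S^{[t]}=\frac{1}{1-\alpha}\bar x^{[t]}-\frac{\alpha}{1-\alpha}\bar x^{[t-1]}$ for $t\ge1$. Then for every $T\ge1$, $$\sum_{t=1}^T\left\|\bar S^{[t]}-\bar x^{[t]}\right\|^2\le\frac{\gamma^2\alpha^2}{(1-\alpha)^4}\sum_{t=1}^T\left\|\frac1N\sum_{i=1}^N\bar g^{[t]}_i\right\|^2.$$
   Context: Setting: $N\ge1$ agents $\mathcal{N}=\{1,\dots,N\}$. $\mathbf{W}=(\omega_{i,j})\in[0,1]^{N\times N}$ is a symmetric doubly stochastic matrix ($\omega_{i,j}=\omega_{j,i}$, $\sum_{j}\omega_{i,j}=1$). $\mathcal{N}_i=\{j\in\mathcal{N}:\omega_{i,j}>0\}$ is the neighborhood of agent $i$ (the algorithm treats $i$ itself as a member of $\mathcal{N}_i$). Agent $i$ has a data distribution $\mathcal{D}_i$; $F(x;\xi)$ is a real-valued loss, differentiable in $x\in\mathbb{R}^d$. A finite validation set $\mathcal{Q}$ is available to every agent, and $J(\xi;x)$ denotes the accuracy of model $x$ on sample $\xi$. Algorithm ROSS (learning rate $\gamma>0$, momentum coefficient $\alpha$): all agents start from a common point $x_i^{[0]}=x^{[0]}$ with $u_i^{[0]}=0$. In each round $t=1,2,\dots$, each agent $i$ draws a sample $\xi_{i,t}\sim\mathcal{D}_i$ and for each $j\in\mathcal{N}_i$ computes $g^{[t]}_{i,j}=\nabla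 F(x^{[t-1]}_j;\xi_{i,t})$. Agent $i$ then sets $x^{[t]}_{i,j}=x^{[t-1]}_i-\gamma g^{[t]}_{j,i}$ for $j\in\mathcal{N}_i$; for $\mathcal{N}'\subseteq\mathcal{N}_i$ it defines $v(\mathcal{N}')=\frac{1}{|\mathcal{Q}|}\sum_{\xi\in\mathcal{Q}}J\big(\xi;\frac{1}{|\mathcal{N}'|}\sum_{j\in\mathcal{N}'}x^{[t]}_{i,j}\big)$ ($v(\emptyset)=0$); Shapley values $\varphi^{[t]}_{i,j}=\sum_{\mathcal{N}'\subseteq\mathcal{N}_i\setminus\{j\}}\frac{v(\mathcal{N}'\cup\{j\})-v(\mathcal{N}')}{|\mathcal{N}_i|\binom{|\mathcal{N}_i|-1}{|\mathcal{N}'|}}$; normalized values $\hat\varphi^{[t]}_{i,j}=\frac{\varphi^{[t]}_{i,j}-\min_{k\in\mathcal{N}_i}\varphi^{[t]}_{i,k}}{\max_{k\in\mathcal{N}_i}\varphi^{[t]}_{i,k}-\min_{k\in\mathcal{N}_i}\varphi^{[t]}_{i,k}}$; weights $\pi^{[t]}_{i,j}=\frac{\hat\varphi^{[t]}_{i,j}}{\omega_{i,j}\sum_{k\in\mathcal{N}_i}\hat\varphi^{[t]}_{i,k}}$; then $\bar g^{[t]}_i=\sum_{j\in\mathcal{N}_i}\pi^{[t]}_{i,j}g^{[t]}_{j,i}$, $\hat u^{[t]}_i=\alpha u^{[t-1]}_i+\bar g^{[t]}_i$, $\hat x^{[t]}_i=x^{[t-1]}_i-\gamma\hat u^{[t]}_i$,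 $u^{[t]}_i=\sum_{j\in\mathcal{N}_i}\omega_{i,j}\hat u^{[t]}_j$, $x^{[t]}_i=\sum_{j\in\mathcal{N}_i}\omega_{i,j}\hat x^{[t]}_j$. Write $\bar x^{[t]}=\frac1N\sum_{i=1}^N x^{[t]}_i$. *)

From HB Require Import structures.
From mathcomp Require Import all_boot all_order all_algebra.
From mathcomp Require Import all_classical all_reals all_analysis.
Set Implicit Arguments. Unset Strict Implicit. Unset Printing Implicit Defensive.
Import Order.TTheory GRing.Theory Num.Theory.
Import numFieldNormedType.Exports.
Local Open Scope ring_scope.

Section ROSS.
Variables (R : realType) (d N : nat) (Xi : Type).
Variable F : 'rV[R]_d -> Xi -> R.
Variable J : Xi -> 'rV[R]_d -> R.
Variable Q : seq Xi.
Variable W : 'M[R]_N.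
Variables (gamma alpha : R).
Variable x0 : 'rV[R]_d.
(* sample realisation: xi i t = xi_{i,t} drawn by agent i in round t *)
Variable xi : 'I_N -> nat -> Xi.

Definition sqnorm (v : 'rV[R]_d) : R := \sum_(k < d) (v 0 k) ^+ 2.

Definition gradF (x : 'rV[R]_d) (s : Xi) : 'rV[R]_d :=
  \row_(k < d) ('D_(delta_mx 0 k) (fun y => F y s) x).

Definition nbhd (i : 'I_N) : {set 'I_N} := [set j | (0 < W i j) || (j == i)].

Definition gmsg (xprev : 'I_N -> 'rV[R]_d) (t : nat) (j i : 'I_N) : 'rV[R]_d :=
  gradF (xprev i) (xi j t).

Definition xij (xprev : 'I_N -> 'rV[R]_d) (t : nat) (i j : 'I_N) : 'rV[R]_d :=
  xprev i - gamma *: gmsg xprev t j i.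

Definition coal_val (xprev : 'I_N -> 'rV[R]_d) (t : nat) (i : 'I_N)
  (S : {set 'I_N}) : R :=
  if S == finset.set0 then 0 else
  (size Q)%:R^-1 * \sum_(s <- Q)
     J s ((#|S|)%:R^-1 *: \sum_(j in S) xij xprev t i j).

Definition shapley (xprev : 'I_N -> 'rV[R]_d) (t : nat) (i j : 'I_N) : R :=
  \sum_(S in powerset (nbhd i :\ j)%SET)
    (coal_val xprev t i (S :|: [set j]) - coal_val xprev t i S) /
    ((#|nbhd i|)%:R * ('C(#|nbhd i|.-1, #|S|))%:R).

Definition shapley_min (xprev : 'I_N -> 'rV[R]_d) (t : nat) (i : 'I_N) : R :=
  \big[Num.min/shapley xprev t i i]_(k in nbhd i) shapley xprev t i k.
Definition shapley_max (xprev : 'I_N -> 'rV[R]_d) (t : nat) (i : 'I_N) : R :=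
  \big[Num.max/shapley xprev t i i]_(k in nbhd i) shapley xprev t i k.

Definition nshapley (xprev : 'I_N -> 'rV[R]_d) (t : nat) (i j : 'I_N) : R :=
  (shapley xprev t i j - shapley_min xprev t i) /
  (shapley_max xprev t i - shapley_min xprev t i).

Definition piw (xprev : 'I_N -> 'rV[R]_d) (t : nat) (i j : 'I_N) : R :=
  nshapley xprev t i j /
  (W i j * \sum_(k in nbhd i) nshapley xprev t i k).

Definition gbar_of (xprev : 'I_N -> 'rV[R]_d) (t : nat) (i : 'I_N) : 'rV[R]_d :=
  \sum_(j in nbhd i) piw xprev t i j *: gmsg xprev t j i.

(* one round t of ROSS: from (x^[t-1], u^[t-1]) to (x^[t], u^[t]) *)
Definition ross_step (t : nat) (st : ('I_N -> 'rV[R]_d) * ('I_N -> 'rV[R]_d))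
  : ('I_N -> 'rV[R]_d) * ('I_N -> 'rV[R]_d) :=
  let xprev := st.1 in let uprev := st.2 in
  let uhat := fun i => alpha *: uprev i + gbar_of xprev t i in
  let xhat := fun i => xprev i - gamma *: uhat i in
  (fun i => \sum_(j in nbhd i) W i j *: xhat j,
   fun i => \sum_(j in nbhd i) W i j *: uhat j).

Fixpoint ross (t : nat) : ('I_N -> 'rV[R]_d) * ('I_N -> 'rV[R]_d) :=
  match t with
  | 0 => (fun _ => x0, fun _ => 0)
  | t'.+1 => ross_step t'.+1 (ross t')
  end.

Definition ross_x (t : nat) (i : 'I_N) : 'rV[R]_d := (ross t).1 i.

(* bar g^[t]_i, for t >= 1 (computed from x^[t-1]) *)
Definition ross_gbar (t : nat) (i : 'I_N) : 'rV[R]_d :=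
  gbar_of (ross t.-1).1 t i.

Definition xbar (t : nat) : 'rV[R]_d := (N%:R)^-1 *: \sum_(i < N) ross_x t i.

Definition Sbar (t : nat) : 'rV[R]_d :=
  if t is t'.+1 then
    (1 - alpha)^-1 *: xbar t - (alpha / (1 - alpha)) *: xbar t'
  else xbar 0.

End ROSS.

From HB Require Import structures.
From mathcomp Require Import all_boot all_order all_algebra.
From mathcomp Require Import all_classical all_reals all_analysis.
From mathcomp Require Import ring lra.
Import Order.TTheory GRing.Theory Num.Theory.
Import numFieldNormedType.Exports.
Local Open Scope ring_scope.
Set Implicit Arguments. Unset Strict Implicit.

(* Averaging over the agents commutes with the doubly stochastic mixing, so
   the mean momentum ubar and the mean iterate xbar follow centralised heavy
   ball dynamics: ubar_{t+1} = alpha ubar_t + Gbar_{t+1} and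
   xbar_{t+1} = xbar_t - gamma ubar_{t+1}.  Hence
   Sbar_t - xbar_t = alpha/(1-alpha) (xbar_t - xbar_{t-1})
                   = - gamma alpha/(1-alpha) ubar_t.
   Writing alpha u + g = alpha u + (1-alpha) (g/(1-alpha)), convexity of the
   square gives |ubar_{t+1}|^2 <= alpha |ubar_t|^2 + |Gbar_{t+1}|^2/(1-alpha),
   and summing this recurrence from ubar_0 = 0 yields
   sum_t |ubar_t|^2 <= sum_t |Gbar_t|^2 / (1-alpha)^2. *)

Section SquaredNorm.
Variables (R : realType) (d : nat).
Implicit Types (u v : 'rV[R]_d) (a c : R).

Lemma sqnorm_ge0 v : 0 <= sqnorm v.
Proof. by rewrite sumr_ge0 // => k _; rewrite sqr_ge0. Qed.

Lemma sqnormZ c v : sqnorm (c *: v) = c ^+ 2 * sqnorm v.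
Proof. by rewrite /sqnorm mulr_sumr; apply: eq_bigr => k _; rewrite mxE exprMn. Qed.

Lemma sqnorm0 : sqnorm (0 : 'rV[R]_d) = 0.
Proof. by rewrite /sqnorm big1 // => k _; rewrite mxE expr0n. Qed.

Lemma sqr_affine_le a (x y : R) :
  0 <= a < 1 -> (a * x + y) ^+ 2 <= a * x ^+ 2 + y ^+ 2 / (1 - a).
Proof.
move=> /andP[a_ge0 a_lt1].
have a1_neq0 : 1 - a != 0 by rewrite subr_eq0 eq_sym lt_eqF.
have -> : a * x ^+ 2 + y ^+ 2 / (1 - a)
          = (a * x + y) ^+ 2 + a / (1 - a) * ((1 - a) * x - y) ^+ 2 by field.
by rewrite lerDl mulr_ge0 ?sqr_ge0 // divr_ge0 // subr_ge0 ltW.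
Qed.

Lemma sqnorm_affine_le a u v :
  0 <= a < 1 -> sqnorm (a *: u + v) <= a * sqnorm u + sqnorm v / (1 - a).
Proof.
move=> a01; rewrite /sqnorm mulr_sumr mulr_suml -big_split /=.
by apply: ler_sum => k _; rewrite !mxE sqr_affine_le.
Qed.

End SquaredNorm.

Lemma sum_damped_recurrence_le (R : realFieldType) (a : R) (s b : nat -> R) :
  0 <= a < 1 -> s 0%N = 0 -> (forall t, 0 <= s t) ->
  (forall t, s t.+1 <= a * s t + b t.+1 / (1 - a)) ->
  forall T, \sum_(0 <= t < T) s t.+1 <= (\sum_(0 <= t < T) b t.+1) / (1 - a) ^+ 2.
Proof.
move=> /andP[a_ge0 a_lt1] s0 s_ge0 s_rec T.
have a1_gt0 : 0 < 1 - a by rewrite subr_gt0.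
have potential n : (1 - a) * (\sum_(0 <= t < n) s t.+1) + a * s n
                   <= (\sum_(0 <= t < n) b t.+1) / (1 - a).
  elim: n => [|n IH]; first by rewrite !big_geq // s0; lra.
  rewrite !big_nat_recr //= mulrDl.
  have := s_rec n; have := s_ge0 n.+1; lra.
rewrite expr2 invfM mulrA ler_pdivlMr // mulrC.
by have := potential T; have := s_ge0 T; nra.
Qed.

Lemma sum_nbhd_mix (R : realType) (N : nat) (V : lmodType R) (W : 'M[R]_N)
    (f : 'I_N -> V) :
  (forall i j, 0 <= W i j) -> (forall j, \sum_(i < N) W i j = 1) ->
  \sum_(i < N) \sum_(j in nbhd W i) W i j *: f j = \sum_(j < N) f j.
Proof.
move=> W_ge0 W_colsum.
have nbhd_full i : \sum_(j in nbhd W i) W i j *: f j = \sum_(j < N) W i j *: f j.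
  rewrite big_mkcond /=; apply: eq_bigr => j _; rewrite inE.
  case: ifP => // /negbT; rewrite negb_or => /andP[Wij_le0 _].
  by rewrite (@le_anti _ _ (W i j) 0) ?scale0r // W_ge0 andbT leNgt.
under eq_bigr do rewrite nbhd_full.
by rewrite exchange_big; apply: eq_bigr => j _; rewrite -scaler_suml W_colsum scale1r.
Qed.

Section RossAverages.
Variables (R : realType) (d N : nat) (Xi : Type).
Variables (F : 'rV[R]_d -> Xi -> R) (J : Xi -> 'rV[R]_d -> R) (Q : seq Xi).
Variables (W : 'M[R]_N) (gamma alpha : R) (x0 : 'rV[R]_d).
Variable xi : 'I_N -> nat -> Xi.
Hypothesis W_ge0 : forall i j, 0 <= W i j.
Hypothesis W_colsum : forall j, \sum_(i < N) W i j = 1.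

Local Notation ross := (ross F J Q W gamma alpha x0 xi).
Local Notation xbar := (xbar F J Q W gamma alpha x0 xi).
Local Notation Sbar := (Sbar F J Q W gamma alpha x0 xi).

Definition ubar (t : nat) : 'rV[R]_d := N%:R^-1 *: \sum_(i < N) (ross t).2 i.

Definition Gbar (t : nat) : 'rV[R]_d :=
  N%:R^-1 *: \sum_(i < N) ross_gbar F J Q W gamma alpha x0 xi t i.

Lemma ubar0 : ubar 0 = 0.
Proof. by rewrite /ubar big1 ?scaler0. Qed.

Lemma ubarS t : ubar t.+1 = alpha *: ubar t + Gbar t.+1.
Proof.
by rewrite /ubar /Gbar /= sum_nbhd_mix // big_split -scaler_sumr scalerDr scalerA
  mulrC -scalerA.
Qed.

Lemma xbarS t : xbar t.+1 = xbar t - gamma *: ubar t.+1.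
Proof.
rewrite /xbar /ross_x /ubar /= sum_nbhd_mix // big_split sumrN -scaler_sumr /=.
by rewrite sum_nbhd_mix // scalerBr scalerA mulrC -scalerA.
Qed.

Lemma Sbar_sub_xbarS t : alpha != 1 ->
  Sbar t.+1 - xbar t.+1 = - (gamma * alpha / (1 - alpha)) *: ubar t.+1.
Proof.
move=> alpha_neq1; have a1_neq0 : 1 - alpha != 0 by rewrite subr_eq0 eq_sym.
rewrite /Sbar (_ : xbar t = xbar t.+1 + gamma *: ubar t.+1); last by rewrite xbarS subrK.
move: (xbar t.+1) (ubar t.+1) => X U.
by apply/rowP => k; rewrite !mxE; field.
Qed.

Lemma sum_sqnorm_ubar_le T : 0 <= alpha < 1 ->
  \sum_(0 <= t < T) sqnorm (ubar t.+1)
  <= (\sum_(0 <= t < T) sqnorm (Gbar t.+1)) / (1 - alpha) ^+ 2.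
Proof.
move=> alpha01.
apply: (sum_damped_recurrence_le (s := fun t => sqnorm (ubar t))
                                  (b := fun t => sqnorm (Gbar t))) => //.
- by rewrite ubar0 sqnorm0.
- by move=> t; rewrite sqnorm_ge0.
- by move=> t; rewrite ubarS sqnorm_affine_le.
Qed.

End RossAverages.

Unset Implicit Arguments.

Theorem lemma3 (R : realType) (d N : nat) (Xi : Type)
  (F : 'rV[R]_d -> Xi -> R) (J : Xi -> 'rV[R]_d -> R) (Q : seq Xi)
  (W : 'M[R]_N) (gamma alpha : R) (x0 : 'rV[R]_d) (xi : 'I_N -> nat -> Xi)
  (T : nat) :
  (0 < N)%N ->
  (forall s (x : 'rV[R]_d), differentiable (fun y => F y s) x) ->
  (forall i j, 0 <= W i j <= 1) ->
  (forall i j, W i j = W j i) ->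
  (forall i, \sum_(j < N) W i j = 1) ->
  0 < gamma -> 0 <= alpha < 1 ->
  (1 <= T)%N ->
  \sum_(1 <= t < T.+1)
     sqnorm (Sbar F J Q W gamma alpha x0 xi t - xbar F J Q W gamma alpha x0 xi t)
  <= gamma ^+ 2 * alpha ^+ 2 / (1 - alpha) ^+ 4 *
     \sum_(1 <= t < T.+1)
       sqnorm ((N%:R)^-1 *: \sum_(i < N) ross_gbar F J Q W gamma alpha x0 xi t i).
Proof.
move=> _ _ W01 Wsym W_rowsum _ alpha01 _.
have W_ge0 i j : 0 <= W i j by case/andP: (W01 i j).
have W_colsum j : \sum_(i < N) W i j = 1.
  by rewrite -(W_rowsum j); apply: eq_bigr => i _; rewrite Wsym.
have alpha_neq1 : alpha != 1 by case/andP: alpha01 => _ /lt_eqF ->.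
rewrite !big_add1 /=.
under eq_bigr => t _ do rewrite (Sbar_sub_xbarS F J Q gamma x0 xi W_ge0 W_colsum) // sqnormZ.
rewrite -mulr_sumr sqrrN expr_div_n exprMn.
have coef_ge0 : 0 <= gamma ^+ 2 * alpha ^+ 2 / (1 - alpha) ^+ 2.
  by apply: divr_ge0; [apply: mulr_ge0|]; exact: sqr_ge0.
have ubar_bound := sum_sqnorm_ubar_le F J Q gamma x0 xi W_ge0 W_colsum T alpha01.
apply: le_trans (ler_wpM2l coef_ge0 ubar_bound) _.
rewrite /Gbar le_eqVlt; apply/orP; left; apply/eqP; field.
by rewrite subr_eq0 eq_sym.
Qed.
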